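(* The matrices $C_1$ and $C_2$ are not zero divisors in $F$; that is, for $A\in F$, each of $C_1A=0$, $AC_1=0$, $C_2A=0$, $AC_2=0$ implies $A=0$.
   Context: $K$ is an infinite field of characteristic different from 2. Let $X=\{x_1,x_2,x_1',x_2'\}$ and $Y=\{y_1,y_2,y_1',y_2'\}$, and let $K[X;Y]\cong K[X]\otimes_K E(Y)$ be the free supercommutative algebra: the $x$'s are even commuting variables, the $y$'s are odd and pairwise anticommuting ($y y=0$ for each odd generator), and $E(Y)$ is the Grassmann algebra on the vector space with basis $Y$. Put $C_1=\begin{pmatrix} x_1&y_1\\ y_1'&x_1'\end{pmatrix}$, $C_2=\begin{pmatrix} x_2&y_2\\ y_2'&x_2'\end{pmatrix}\in M_2(K[X;Y])$, and let $F=K[C_1,C_2]$ be the unital $K$-subalgebra of $M_2(K[X;Y])$ generated by $C_1,C_2$ (this is the relatively free algebra of rank 2 of $M_{11}(E)$). *)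

From HB Require Import structures.
From mathcomp Require Import all_boot all_order all_algebra.
From mathcomp Require Import mpoly.
Set Implicit Arguments. Unset Strict Implicit. Unset Printing Implicit Defensive.
Import GRing.Theory.
Local Open Scope ring_scope.

(* K[X] with X = {x1, x2, x1', x2'} = 'X_0, 'X_1, 'X_2, 'X_3. *)
Definition Pol (K : fieldType) := {mpoly K[4]}.

(* The free supercommutative algebra K[X;Y] = K[X] (x) E(Y), Y = {y1,y2,y1',y2'}
   (odd generators 0,1,2,3), realised faithfully through its left regular
   representation on the free K[X]-module with basis the 16 Grassmann
   monomials y_S, S subset of {0,1,2,3}; the monomial y_S is indexed by the
   k : 'I_16 whose binary digits are the indicator of S. *)
Definition SC (K : fieldType) := 'M[Pol K]_16.

Definition inS (k : 'I_16) (i : 'I_4) : bool := odd (k %/ 2 ^ i).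

(* sign of y_i y_S = (-1)^#{j in S | j < i} y_{S u {i}} *)
Definition sgnY (K : fieldType) (S : 'I_16) (i : 'I_4) : Pol K :=
  (-1) ^+ #|[set j : 'I_4 | inS S j && (j < i)%N]|.

(* left multiplication by the odd generator y_i *)
Definition oddgen (K : fieldType) (i : 'I_4) : SC K :=
  \matrix_(T < 16, S < 16)
    if (~~ inS S i) && (val T == (val S + 2 ^ i)%N) then sgnY K S i else 0.

Definition evengen (K : fieldType) (i : 'I_4) : SC K := ('X_i : Pol K)%:M.

Definition mx2 (K : fieldType) (a b c d : SC K) : 'M[SC K]_2 :=
  \matrix_(i < 2, j < 2)
    if i == ord0 then (if j == ord0 then a else b) else (if j == ord0 then c else d).

Definition i0 : 'I_4 := @Ordinal 4 0 isT.
Definition i1 : 'I_4 := @Ordinal 4 1 isT.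
Definition i2 : 'I_4 := @Ordinal 4 2 isT.
Definition i3 : 'I_4 := @Ordinal 4 3 isT.

(* C1 = [[x1, y1], [y1', x1']],  C2 = [[x2, y2], [y2', x2']] *)
Definition C1 (K : fieldType) : 'M[SC K]_2 :=
  mx2 (evengen K i0) (oddgen K i0) (oddgen K i2) (evengen K i2).
Definition C2 (K : fieldType) : 'M[SC K]_2 :=
  mx2 (evengen K i1) (oddgen K i1) (oddgen K i3) (evengen K i3).

Definition scal (K : fieldType) (k : K) : 'M[SC K]_2 :=
  (((k%:MP : Pol K)%:M : SC K)%:M).

Inductive inF (K : fieldType) : 'M[SC K]_2 -> Prop :=
| F_scal (k : K) : inF (scal k)
| F_C1 : inF (C1 K)
| F_C2 : inF (C2 K)
| F_add A B : inF A -> inF B -> inF (A + B)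
| F_mul A B : inF A -> inF B -> inF (A * B).

From HB Require Import structures.
From mathcomp Require Import all_boot all_order all_algebra.
From mathcomp Require Import mpoly.
From mathcomp Require Import zify.
Set Implicit Arguments. Unset Strict Implicit. Unset Printing Implicit Defensive.
Import GRing.Theory.
Local Open Scope ring_scope.

(* Multiplying C = [[x, y], [y', x']] on either side by [[x', -y], [-y', x]]
   gives a diagonal matrix with entries x x' - n, where x x' is a nonzero
   polynomial and n, a product of two odd generators, is nilpotent (odd
   generators act strictly lower-triangularly on the basis y_S).  Such an
   entry is regular because its product with the cofactor
   sum_i (x x')^(m-1-i) n^i is the regular scalar (x x')^m. *)

Section LowerByMatrices.
Variable R : pzSemiRingType.

Definition lower_by n k (M : 'M[R]_n) :=
  forall i j : 'I_n, (i < j + k)%N -> M i j = 0.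

Lemma lower_by_mulmx n k l (M N : 'M[R]_n) :
  lower_by k M -> lower_by l N -> lower_by (k + l) (M *m N).
Proof.
move=> lowM lowN i j ltij; rewrite mxE big1 // => r _.
have [ltir | leri] := ltnP i (r + k); first by rewrite lowM // mul0r.
by rewrite lowN ?mulr0 //; lia.
Qed.

Lemma lower_by_le n k l (M : 'M[R]_n) :
  (l <= k)%N -> lower_by k M -> lower_by l M.
Proof. by move=> lelk lowM i j ltij; apply: lowM; lia. Qed.

Lemma lower_by_exp n k (M : 'M[R]_n.+1) m :
  lower_by k M -> lower_by (k * m) (M ^+ m).
Proof.
move=> lowM; elim: m => [|m IHm].
  move=> i j ltij; rewrite expr0 [1]/(GRing.one _) /= mxE.
  by case: eqVneq ltij => [->|]; rewrite ?muln0 ?addn0 ?ltnn.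
by rewrite exprS mulnS -mulmxE; apply: lower_by_mulmx.
Qed.

Lemma lower_by_size n (M : 'M[R]_n) : lower_by n M -> M = 0.
Proof. by move=> lowM; apply/matrixP => i j; rewrite mxE lowM // ltn_addl. Qed.

Lemma lower_by1_nilpotent n (M : 'M[R]_n.+1) :
  lower_by 1 M -> M ^+ n.+1 = 0.
Proof. by move=> /(lower_by_exp (m := n.+1)); rewrite mul1n; apply: lower_by_size. Qed.

End LowerByMatrices.

Section ScalarMatrices.
Variables (R : idomainType) (n : nat).

Lemma scalar_mx_lreg (c : R) : c != 0 -> GRing.lreg (c%:M : 'M[R]_n.+1).
Proof.
move=> c_neq0; apply: mulrI0_lreg => Z /eqP.
by rewrite -mulmxE mul_scalar_mx scalemx_eq0 (negbTE c_neq0) => /eqP.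
Qed.

Lemma scalar_mx_rreg (c : R) : c != 0 -> GRing.rreg (c%:M : 'M[R]_n.+1).
Proof.
move=> c_neq0; apply: mulIr0_rreg => Z /eqP.
by rewrite -mulmxE scalar_mxC mul_scalar_mx scalemx_eq0 (negbTE c_neq0) => /eqP.
Qed.

Lemma scalar_mx_comm (c : R) (M : 'M[R]_n.+1) : GRing.comm (c%:M) M.
Proof. by rewrite /GRing.comm -!mulmxE scalar_mxC. Qed.

End ScalarMatrices.

Section ScalarMinusNilpotent.
Variables (R : idomainType) (n : nat) (a : R) (N : 'M[R]_n.+1).
Hypotheses (a_neq0 : a != 0) (N_nilpotent : N ^+ n.+1 = 0).

Let cofactor := \sum_(i < n.+1) (a%:M) ^+ (n - i) * N ^+ i.

Let scalar_sub_mul_cofactor : (a%:M - N) * cofactor = (a ^+ n.+1)%:M.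
Proof.
by rewrite -(subrXX_comm _ (scalar_mx_comm a N)) N_nilpotent subr0 rmorphXn.
Qed.

Let cofactor_comm_scalar_sub : GRing.comm cofactor (a%:M - N).
Proof.
have comm_term i : GRing.comm ((a%:M) ^+ (n - i) * N ^+ i) N.
  by apply/commr_sym/commrM; [exact/commrX/commr_sym/scalar_mx_comm | exact/commrX/commr_refl].
apply: commrB; first exact/commr_sym/scalar_mx_comm.
by apply/commr_sym/commr_sum => i _; apply/commr_sym/comm_term.
Qed.

Lemma scalar_sub_nilpotent_lreg : GRing.lreg (a%:M - N).
Proof.
apply: (@GRing.lregMl _ cofactor).
rewrite cofactor_comm_scalar_sub scalar_sub_mul_cofactor.
by apply: scalar_mx_lreg; rewrite expf_neq0.
Qed.

Lemma scalar_sub_nilpotent_rreg : GRing.rreg (a%:M - N).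
Proof.
apply: (@GRing.rregMr _ _ cofactor); rewrite scalar_sub_mul_cofactor.
by apply: scalar_mx_rreg; rewrite expf_neq0.
Qed.

End ScalarMinusNilpotent.

Lemma scalar_sub_lower_by1_reg (R : idomainType) n (a : R) (N : 'M[R]_n.+1) :
  a != 0 -> lower_by 1 N -> GRing.lreg (a%:M - N) /\ GRing.rreg (a%:M - N).
Proof.
move=> a_neq0 /lower_by1_nilpotent N_nilpotent.
by split; [apply: scalar_sub_nilpotent_lreg | apply: scalar_sub_nilpotent_rreg].
Qed.

Section TwoByTwo.
Variable K : fieldType.

Lemma mx2_eta (A : 'M[SC K]_2) :
  A = mx2 (A ord0 ord0) (A ord0 ord_max) (A ord_max ord0) (A ord_max ord_max).
Proof.
apply/matrixP => i j; rewrite mxE.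
by case: i j => [[|[|//]] ?] [[|[|//]] ?]; congr (A _ _); apply: val_inj.
Qed.

Lemma mx2_mul (a b c d a' b' c' d' : SC K) :
  mx2 a b c d * mx2 a' b' c' d' =
  mx2 (a * a' + b * c') (a * b' + b * d') (c * a' + d * c') (c * b' + d * d').
Proof.
apply/matrixP => i j; rewrite -mulmxE !mxE !big_ord_recl big_ord0 !mxE /=.
by case: i j => [[|[|//]] ?] [[|[|//]] ?]; rewrite addr0.
Qed.

Lemma mx2_eq0 (a b c d : SC K) :
  (mx2 a b c d == 0) = [&& a == 0, b == 0, c == 0 & d == 0].
Proof.
apply/eqP/and4P => [/matrixP eq0 | [/eqP-> /eqP-> /eqP-> /eqP->]].
  by split; [move: (eq0 ord0 ord0) | move: (eq0 ord0 ord_max)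
    | move: (eq0 ord_max ord0) | move: (eq0 ord_max ord_max)]; rewrite !mxE /= => ->.
by apply/matrixP => i j; rewrite !mxE; do 2 case: ifP.
Qed.

Lemma mx2_diag_lreg (d d' : SC K) :
  GRing.lreg d -> GRing.lreg d' -> GRing.lreg (mx2 d 0 0 d').
Proof.
move=> d_lreg d'_lreg; apply: mulrI0_lreg => A /eqP.
rewrite [A]mx2_eta mx2_mul !mul0r !addr0 !add0r !mx2_eq0 !mulrI_eq0 //.
by move=> entries_eq0; apply/eqP; rewrite mx2_eq0.
Qed.

Lemma mx2_diag_rreg (d d' : SC K) :
  GRing.rreg d -> GRing.rreg d' -> GRing.rreg (mx2 d 0 0 d').
Proof.
move=> d_rreg d'_rreg; apply: mulIr0_rreg => A /eqP.
rewrite [A]mx2_eta mx2_mul !mulr0 !addr0 !add0r !mx2_eq0 !mulIr_eq0 //.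
by move=> entries_eq0; apply/eqP; rewrite mx2_eq0.
Qed.

Lemma mx2_cofactor_mul (x x' : Pol K) (y y' : SC K) :
  mx2 x'%:M (- y) (- y') x%:M * mx2 x%:M y y' x'%:M =
  mx2 ((x' * x)%:M - y * y') 0 0 ((x * x')%:M - y' * y).
Proof.
rewrite mx2_mul !scalar_mxM !mulNr (scalar_mx_comm x' y) (scalar_mx_comm x y').
by rewrite subrr addNr [- _ + _]addrC.
Qed.

Lemma mx2_mul_cofactor (x x' : Pol K) (y y' : SC K) :
  mx2 x%:M y y' x'%:M * mx2 x'%:M (- y) (- y') x%:M =
  mx2 ((x * x')%:M - y * y') 0 0 ((x' * x)%:M - y' * y).
Proof.
rewrite mx2_mul !scalar_mxM !mulrN (scalar_mx_comm x y) (scalar_mx_comm x' y').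
by rewrite addNr subrr [- _ + _]addrC.
Qed.

End TwoByTwo.

Section RegularBlocks.
Variables (K : fieldType) (x x' : Pol K) (y y' : SC K).
Hypotheses (x_neq0 : x != 0) (x'_neq0 : x' != 0).
Hypotheses (y_lower : lower_by 1 y) (y'_lower : lower_by 1 y').

Let diag_entry_reg (c : Pol K) (u v : SC K) :
  c != 0 -> lower_by 1 u -> lower_by 1 v ->
  GRing.lreg (c%:M - u * v) /\ GRing.rreg (c%:M - u * v).
Proof.
move=> c_neq0 u_lower v_lower; apply: scalar_sub_lower_by1_reg => //.
by apply: (@lower_by_le _ _ (1 + 1)) => //; rewrite -mulmxE; apply: lower_by_mulmx.
Qed.

Lemma mx2_scalar_lower_lreg : GRing.lreg (mx2 x%:M y y' x'%:M).
Proof.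
apply: (@GRing.lregMl _ (mx2 x'%:M (- y) (- y') x%:M)).
rewrite mx2_cofactor_mul; apply: mx2_diag_lreg.
  by have [] := diag_entry_reg (mulf_neq0 x'_neq0 x_neq0) y_lower y'_lower.
by have [] := diag_entry_reg (mulf_neq0 x_neq0 x'_neq0) y'_lower y_lower.
Qed.

Lemma mx2_scalar_lower_rreg : GRing.rreg (mx2 x%:M y y' x'%:M).
Proof.
apply: (@GRing.rregMr _ _ (mx2 x'%:M (- y) (- y') x%:M)).
rewrite mx2_mul_cofactor; apply: mx2_diag_rreg.
  by have [] := diag_entry_reg (mulf_neq0 x_neq0 x'_neq0) y_lower y'_lower.
by have [] := diag_entry_reg (mulf_neq0 x'_neq0 x_neq0) y'_lower y_lower.
Qed.

End RegularBlocks.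

Lemma mpolyX_neq0 (K : fieldType) (i : 'I_4) : ('X_i : Pol K) != 0.
Proof.
apply/eqP => Xi_eq0; have := mcoeffXU K i i.
by rewrite Xi_eq0 mcoeff0 eqxx => /esym/eqP; rewrite oner_eq0.
Qed.

Lemma oddgen_lower_by1 (K : fieldType) (i : 'I_4) : lower_by 1 (oddgen K i).
Proof.
move=> T S ltTS; rewrite mxE; case: ifP => // /andP[_ /eqP T_eq].
by move: ltTS; rewrite [nat_of_ord T]T_eq ltn_add2l ltnNge expn_gt0.
Qed.

Theorem lemma2 (K : fieldType)
  (K_infinite : forall s : seq K, exists x : K, x \notin s)
  (K_char : 2%N \notin [pchar K])
  (A : 'M[SC K]_2) :
  inF A ->
  [/\ C1 K * A = 0 -> A = 0,
      A * C1 K = 0 -> A = 0,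
      C2 K * A = 0 -> A = 0
    & A * C2 K = 0 -> A = 0].
Proof.
move=> _.
have C_reg (i j : 'I_4) :
    GRing.lreg (mx2 (evengen K i) (oddgen K i) (oddgen K j) (evengen K j)) /\
    GRing.rreg (mx2 (evengen K i) (oddgen K i) (oddgen K j) (evengen K j)).
  by split; [apply: mx2_scalar_lower_lreg | apply: mx2_scalar_lower_rreg];
    exact: mpolyX_neq0 || exact: oddgen_lower_by1.
have [C1_lreg C1_rreg] := C_reg i0 i2; have [C2_lreg C2_rreg] := C_reg i1 i3.
by split=> /eqP; [rewrite mulrI_eq0 | rewrite mulIr_eq0
  | rewrite mulrI_eq0 | rewrite mulIr_eq0] => // /eqP.
Qed.
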